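(* Fix $b>0$. There exists $C=C(b)>0$ such that for all $x,y\in\mathbb Z_{\ge0}$ and all integers $N\ge n\ge1$, $$\mathfrak p^N_n(x,y)\le\frac{C}{\sqrt{n+1}}\,e^{-b|x-y|/\sqrt n}.$$
   Context: Let $p_n(z)$ be the probability that simple symmetric random walk on $\mathbb Z$ started at $0$ is at $z$ at time $n$. For $x,y\in\mathbb Z_{\ge0}$ set $p^{(1/2)}_n(x,y)=p_n(x-y)-p_n(x+y+2)$, $\psi(x;n)=\sum_{y\ge0}p^{(1/2)}_n(x,y)$, and for $0\le n\le N$, $\mathfrak p^N_n(x,y)=p^{(1/2)}_n(x,y)\,\psi(y;N-n)/\psi(x;N)$. *)

From Stdlib Require Import Reals ZArith Lra Lia.
Open Scope R_scope.

(* p_n(z): probability that simple symmetric random walk on Z started at 0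
   is at z at time n (defined by the one-step recursion of the walk). *)
Fixpoint srw_p (n : nat) : Z -> R :=
  match n with
  | O => fun z => if Z.eqb z 0 then 1 else 0
  | S m => fun z => (srw_p m (z - 1)%Z + srw_p m (z + 1)%Z) / 2
  end.

Definition p_half (n x y : nat) : R :=
  srw_p n (Z.of_nat x - Z.of_nat y)%Z - srw_p n (Z.of_nat x + Z.of_nat y + 2)%Z.

(* psi(x;n) = sum_{y>=0} p^(1/2)_n(x,y).  All terms with y > x + n vanish
   (both |x-y| > n and x+y+2 > n), so the series is the finite sum over
   y = 0 .. x+n (sum_f_R0 f k = f 0 + ... + f k). *)
Definition psi (x n : nat) : R :=
  sum_f_R0 (fun y => p_half n x y) (x + n).

Definition frak_p (N n x y : nat) : R :=
  p_half n x y * psi y (N - n) / psi x N.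

From Stdlib Require Import Reals ZArith Lra Lia Psatz.
Open Scope R_scope.

(* Write d = |x-y|, t = d / sqrt n and P = p_n(d).  The argument has three
   ingredients, developed in this order after some finite-sum bookkeeping:
   1. Local estimates for p_n, all derived from the binomial ratio
      p_n(u+2) / p_n(u) = (n-u)/(n+u+2): unimodality, the size of the mode
      q_n = p_n(0) + p_n(1) ~ 1/sqrt n, and the Gaussian bound
      P <= e q_n exp(-t^2/8).
   2. The killed kernel p^(1/2)_n(x,y) = p_n(d) - p_n(d + 2(min x y + 1)),
      bounded by P and, near the wall, by 2(x+1)(x+y+1) P / n.
   3. The survival function psi(x;N), which telescopes to the p_N-mass of
      the window -x..x+1; hence psi <= min(1, (2x+2) q_N) and, counting
      pairs of sites up to the diffusive scale, psi(x;N) >~ (x+1)/(x+1+sqrt N).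
   Combining 2 and 3 gives frak_p <= 204 (1+t)^2 P; by 1, the factor
   (1+t)^2 exp(-t^2/8) is absorbed into exp(2(b+2)^2) exp(-b t), and
   q_n <= sqrt 2 / sqrt(n+1) yields the theorem. *)

Notation p := srw_p.

Fixpoint psum (f : nat -> R) (k : nat) : R :=
  match k with O => 0 | S k => psum f k + f k end.

Lemma psum_ext f g k : (forall i, (i < k)%nat -> f i = g i) -> psum f k = psum g k.
Proof.
  induction k as [|k IH]; intros H; simpl; [reflexivity|].
  rewrite IH by (intros; apply H; lia). rewrite H by lia. reflexivity.
Qed.

Lemma psum_lincomb a c f g k :
  psum (fun i => a * f i + c * g i) k = a * psum f k + c * psum g k.
Proof. induction k as [|k IH]; simpl; [ring|]. rewrite IH. ring. Qed.

Lemma psum_split f a b : psum f (a + b) = psum f a + psum (fun i => f (a + i)%nat) b.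
Proof.
  induction b as [|b IH]; simpl; [rewrite Nat.add_0_r; ring|].
  rewrite Nat.add_succ_r. simpl. rewrite IH. ring.
Qed.

Lemma psum_nonneg f k : (forall i, 0 <= f i) -> 0 <= psum f k.
Proof. intros H; induction k; simpl; [lra|]. specialize (H k). lra. Qed.

Lemma psum_le_const f k c : (forall i, (i < k)%nat -> f i <= c) -> psum f k <= INR k * c.
Proof.
  induction k as [|k IH]; intros H; cbn [psum]; [simpl; lra|]. rewrite S_INR.
  specialize (IH ltac:(intros; apply H; lia)). specialize (H k ltac:(lia)). lra.
Qed.

Lemma psum_ge_const f k c : (forall i, (i < k)%nat -> c <= f i) -> INR k * c <= psum f k.
Proof.
  induction k as [|k IH]; intros H; cbn [psum]; [simpl; lra|]. rewrite S_INR.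
  specialize (IH ltac:(intros; apply H; lia)). specialize (H k ltac:(lia)). lra.
Qed.

(* Telescoping with gap w: both sides count g on [0,w) minus g on [L, L+w). *)
Lemma psum_telescope g w L :
  psum (fun i => g i - g (i + w)%nat) L = psum g w - psum (fun i => g (L + i)%nat) w.
Proof.
  pose proof (psum_split g w L) as Hw. pose proof (psum_split g L w) as HL.
  rewrite Nat.add_comm in HL.
  rewrite (psum_ext _ (fun i => 1 * g i + (-1) * g (w + i)%nat))
    by (intros; rewrite Nat.add_comm; ring).
  rewrite psum_lincomb. lra.
Qed.

Lemma sum_f_R0_psum f L : sum_f_R0 f L = psum f (S L).
Proof. induction L as [|L IH]; simpl; [lra|]. rewrite IH. reflexivity. Qed.

Lemma nat_ind2 (P : nat -> Prop) :
  P 0%nat -> P 1%nat -> (forall n, P n -> P (S (S n))) -> forall n, P n.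
Proof.
  intros H0 H1 HS n. enough (P n /\ P (S n)) by tauto.
  induction n as [|n [IH1 IH2]]; auto.
Qed.

Lemma p_S n u : p (S n) u = (p n (u - 1)%Z + p n (u + 1)%Z) / 2.
Proof. reflexivity. Qed.

Lemma p_nonneg n u : 0 <= p n u.
Proof.
  revert u; induction n as [|n IH]; intros u; simpl.
  - destruct (Z.eqb u 0); lra.
  - pose proof (IH (u - 1)%Z). pose proof (IH (u + 1)%Z). lra.
Qed.

Lemma p_sym n u : p n (- u)%Z = p n u.
Proof.
  revert u; induction n as [|n IH]; intros u.
  - simpl. destruct (Z.eqb_spec (- u) 0), (Z.eqb_spec u 0); lra || lia.
  - rewrite !p_S. replace (- u - 1)%Z with (- (u + 1))%Z by lia.
    replace (- u + 1)%Z with (- (u - 1))%Z by lia. rewrite !IH. lra.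
Qed.

Lemma p_supp n u : (Z.of_nat n < Z.abs u)%Z -> p n u = 0.
Proof.
  revert u; induction n as [|n IH]; intros u H.
  - simpl. destruct (Z.eqb_spec u 0); [lia|lra].
  - rewrite p_S, !IH by lia. lra.
Qed.

(* The binomial ratio p_n(u+2) / p_n(u) = (n-u) / (n+u+2), in cleared form. *)
Lemma p_ratio n u : (INR n + IZR u + 2) * p n (u + 2)%Z = (INR n - IZR u) * p n u.
Proof.
  revert u; induction n as [|n IH]; intros u.
  - simpl. destruct (Z.eqb_spec (u + 2) 0), (Z.eqb_spec u 0); subst; try lia.
    + replace u with (-2)%Z by lia. simpl. lra.
    + simpl. lra.
    + lra.
  - rewrite !p_S, S_INR.
    pose proof (IH (u + 1)%Z) as H1. pose proof (IH (u - 1)%Z) as H2.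
    replace (u + 1 + 2)%Z with (u + 2 + 1)%Z in H1 by lia.
    replace (u - 1 + 2)%Z with (u + 1)%Z in H2 by lia.
    replace (u + 2 - 1)%Z with (u + 1)%Z by lia.
    rewrite plus_IZR in H1. rewrite minus_IZR in H2. lra.
Qed.

Lemma p_decr n u : (-1 <= u)%Z -> p n (u + 2)%Z <= p n u.
Proof.
  intros Hu. pose proof (p_ratio n u). pose proof (p_nonneg n u).
  pose proof (p_nonneg n (u + 2)). apply IZR_le in Hu. pose proof (pos_INR n). nra.
Qed.

Lemma p_decr_iter n d k : (0 <= d)%Z -> p n (d + 2 * Z.of_nat k)%Z <= p n d.
Proof.
  intros Hd. induction k as [|k IH].
  - replace (d + 2 * Z.of_nat 0)%Z with d by lia. lra.
  - replace (d + 2 * Z.of_nat (S k))%Z with (d + 2 * Z.of_nat k + 2)%Z by lia.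
    pose proof (p_decr n (d + 2 * Z.of_nat k)%Z ltac:(lia)). lra.
Qed.

(* q_n = p_n(0) + p_n(1) dominates every p_n(u) (p_le_q) and has size
   1/sqrt(n) (q_upper, q_lower); it is the local scale of the walk. *)
Definition q n := p n 0 + p n 1.

Lemma q_nonneg n : 0 <= q n.
Proof. unfold q. pose proof (p_nonneg n 0). pose proof (p_nonneg n 1). lra. Qed.

(* By unimodality and symmetry, every p_n(u) is at most the mode. *)
Lemma p_le_q n u : p n u <= q n.
Proof.
  assert (Hnat : forall k, p n (Z.of_nat k) <= q n).
  { unfold q. pose proof (p_nonneg n 0). pose proof (p_nonneg n 1).
    induction k as [k IH] using lt_wf_ind.
    destruct k as [|[|k]]; [simpl; lra | simpl; lra |].
    replace (Z.of_nat (S (S k))) with (Z.of_nat k + 2)%Z by lia.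
    pose proof (p_decr n (Z.of_nat k) ltac:(lia)). specialize (IH k ltac:(lia)). lra. }
  destruct (Z_le_gt_dec 0 u).
  - replace u with (Z.of_nat (Z.to_nat u)) by lia. apply Hnat.
  - replace u with (- Z.of_nat (Z.to_nat (- u)))%Z by lia. rewrite p_sym. apply Hnat.
Qed.

Lemma p_block_mass m a k : psum (fun i => p m (a + Z.of_nat i)%Z) k <= 1.
Proof.
  revert a; induction m as [|m IH]; intros a.
  - enough (psum (fun i => p 0 (a + Z.of_nat i)%Z) k <= 1 /\
            ((a + Z.of_nat k <= 0)%Z -> psum (fun i => p 0 (a + Z.of_nat i)%Z) k = 0)) by tauto.
    induction k as [|k [H1 H2]]; cbn [psum]; [split; [lra|auto]|].
    change (p 0 (a + Z.of_nat k)%Z) with (if Z.eqb (a + Z.of_nat k) 0 then 1 else 0).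
    destruct (Z.eqb_spec (a + Z.of_nat k) 0).
    + rewrite H2 by lia. split; [lra|lia].
    + split; [lra|]. intros. rewrite H2 by lia. lra.
  - rewrite (psum_ext _ (fun i => / 2 * p m ((a - 1) + Z.of_nat i)%Z
                                 + / 2 * p m ((a + 1) + Z.of_nat i)%Z)).
    2:{ intros i _. rewrite p_S. replace (a + Z.of_nat i - 1)%Z with (a - 1 + Z.of_nat i)%Z by lia.
        replace (a + Z.of_nat i + 1)%Z with (a + 1 + Z.of_nat i)%Z by lia. lra. }
    rewrite psum_lincomb. pose proof (IH (a - 1)%Z). pose proof (IH (a + 1)%Z). lra.
Qed.

Lemma p_S0 n : p (S n) 0 = p n 1.
Proof.
  rewrite p_S. replace (0 - 1)%Z with (- (1))%Z by lia. rewrite p_sym.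
  replace (0 + 1)%Z with 1%Z by lia. lra.
Qed.

Lemma p_two_step_0 n : (INR n + 2) * p (S (S n)) 0 = (INR n + 1) * p n 0.
Proof.
  rewrite p_S0, p_S. replace (1 - 1)%Z with 0%Z by lia. replace (1 + 1)%Z with (0 + 2)%Z by lia.
  pose proof (p_ratio n 0) as H. simpl IZR in H. lra.
Qed.

Lemma p_two_step_1 n : (INR n + 3) * p (S (S n)) 1 = (INR n + 2) * p n 1.
Proof.
  rewrite p_S. replace (1 - 1)%Z with 0%Z by lia. replace (1 + 1)%Z with (0 + 2)%Z by lia.
  pose proof (p_ratio (S n) 0) as H. rewrite S_INR in H. simpl IZR in H.
  rewrite p_S0 in *. lra.
Qed.

Lemma q_two_step n :
  (INR n + 1) * q n <= (INR n + 2) * q (S (S n)) /\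
  (INR n + 3) * q (S (S n)) <= (INR n + 2) * q n.
Proof.
  pose proof (p_two_step_0 n). pose proof (p_two_step_1 n). pose proof (pos_INR n).
  pose proof (p_nonneg n 0). pose proof (p_nonneg n 1).
  pose proof (p_nonneg (S (S n)) 0). pose proof (p_nonneg (S (S n)) 1).
  unfold q. split; nra.
Qed.

Lemma q_upper n : q n ^ 2 * (INR n + 2) <= 2.
Proof.
  induction n as [| |n IH] using nat_ind2; [unfold q; simpl; lra | unfold q; simpl; lra |].
  destruct (q_two_step n) as [_ H]. pose proof (pos_INR n). pose proof (q_nonneg (S (S n))).
  rewrite !S_INR.
  assert (Hq : q (S (S n)) <= (INR n + 2) / (INR n + 3) * q n)
    by (apply (Rmult_le_reg_l (INR n + 3)); [lra|]; field_simplify; lra).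
  assert (Hsq : q (S (S n)) ^ 2 <= ((INR n + 2) / (INR n + 3)) ^ 2 * q n ^ 2)
    by (rewrite <- Rpow_mult_distr; apply pow_incr; lra).
  assert (Hfac : ((INR n + 2) / (INR n + 3)) ^ 2 * (INR n + 4) <= INR n + 2).
  { apply (Rmult_le_reg_l ((INR n + 3) ^ 2)); [nra|]. field_simplify; nra. }
  pose proof (pow2_ge_0 (q n)). nra.
Qed.

Lemma q_lower n : 3 <= q n ^ 2 * (4 * (2 * INR n + 1)).
Proof.
  induction n as [| |n IH] using nat_ind2; [unfold q; simpl; lra | unfold q; simpl; lra |].
  destruct (q_two_step n) as [H _]. pose proof (pos_INR n). pose proof (q_nonneg n).
  rewrite !S_INR.
  assert (Hq : (INR n + 1) / (INR n + 2) * q n <= q (S (S n)))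
    by (apply (Rmult_le_reg_l (INR n + 2)); [lra|]; field_simplify; lra).
  assert (Hsq : ((INR n + 1) / (INR n + 2)) ^ 2 * q n ^ 2 <= q (S (S n)) ^ 2).
  { rewrite <- Rpow_mult_distr. apply pow_incr. split; [|lra].
    apply Rmult_le_pos; [|lra]. apply Rlt_le, Rdiv_lt_0_compat; lra. }
  assert (Hfac : 2 * INR n + 1 <= ((INR n + 1) / (INR n + 2)) ^ 2 * (2 * INR n + 5)).
  { apply (Rmult_le_reg_l ((INR n + 2) ^ 2)); [nra|]. field_simplify; nra. }
  pose proof (pow2_ge_0 (q n)). nra.
Qed.

Lemma q_sqrt_upper n : q n * sqrt (INR n + 1) <= sqrt 2.
Proof.
  pose proof (q_upper n). pose proof (q_nonneg n). pose proof (pos_INR n).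
  rewrite <- (sqrt_square (q n)) by auto. rewrite <- sqrt_mult by nra.
  apply sqrt_le_1_alt. nra.
Qed.

Lemma q_sqrt_shift_upper m : q m * sqrt (INR m + 2) <= 3 / 2.
Proof.
  pose proof (q_upper m). pose proof (q_nonneg m). pose proof (pos_INR m).
  set (u := sqrt (INR m + 2)). assert (u * u = INR m + 2) by (apply sqrt_sqrt; lra).
  assert (0 <= u) by apply sqrt_pos. assert (0 <= q m * u) by nra. nra.
Qed.

Lemma q_sqrt_lower N : 1 <= q N * (2 * sqrt (INR N + 1)).
Proof.
  pose proof (q_lower N). pose proof (q_nonneg N). pose proof (pos_INR N).
  set (v := sqrt (INR N + 1)).
  assert (v * v = INR N + 1) by (apply sqrt_sqrt; lra).
  assert (0 <= v) by apply sqrt_pos.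
  assert (1 <= (q N * (2 * v)) ^ 2) by nra.
  assert (0 <= q N * (2 * v)) by nra. nra.
Qed.

Lemma exp_le a b : a <= b -> exp a <= exp b.
Proof. intros [H|H]; [apply Rlt_le, exp_increasing; auto | subst; lra]. Qed.

(* One step of the ratio p_n(u+2)/p_n(u) = (n-u)/(n+u+2) <= 1 - (u+1)/(n+1)
   <= exp(-(u+1)/(n+1)). *)
Lemma p_step_exp n (u : nat) :
  p n (Z.of_nat u + 2)%Z <= p n (Z.of_nat u) * exp (- (INR u + 1) / (INR n + 1)).
Proof.
  pose proof (p_ratio n (Z.of_nat u)) as H. rewrite <- INR_IZR_INZ in H.
  pose proof (p_nonneg n (Z.of_nat u)). pose proof (p_nonneg n (Z.of_nat u + 2)).
  pose proof (pos_INR n). pose proof (pos_INR u).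
  pose proof (exp_ineq1_le (- (INR u + 1) / (INR n + 1))) as E.
  destruct (Rle_dec (INR u) (INR n)).
  - assert (1 + - (INR u + 1) / (INR n + 1) = (INR n - INR u) / (INR n + 1)) by (field; lra).
    assert (p n (Z.of_nat u + 2) <= p n (Z.of_nat u) * ((INR n - INR u) / (INR n + 1))).
    { apply (Rmult_le_reg_l (INR n + 1)); [lra|]. field_simplify; [|lra]. nra. }
    nra.
  - assert (Hz : p n (Z.of_nat u + 2) = 0) by nra. rewrite Hz.
    apply Rmult_le_pos; [lra | apply Rlt_le, exp_pos].
Qed.

(* Gaussian decay: multiplying the steps, p_n(u) e^{u^2/(4(n+1))} stays
   below its value q_n e^{1/(4(n+1))} at u in {0, 1}. *)
Lemma p_gauss n (u : nat) :
  p n (Z.of_nat u) * exp (INR u ^ 2 / (4 * (INR n + 1))) <= q n * exp (1 / (4 * (INR n + 1))).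
Proof.
  pose proof (pos_INR n).
  set (D := 4 * (INR n + 1)).
  assert (HD0 : 0 <= 1 / D) by (apply Rlt_le, Rdiv_lt_0_compat; unfold D; lra).
  pose proof (exp_pos (1 / D)). pose proof (p_nonneg n 0). pose proof (p_nonneg n 1).
  induction u as [u IH] using lt_wf_ind.
  destruct u as [|[|u]].
  - replace (INR 0 ^ 2 / D) with 0 by (simpl; unfold D; field; lra).
    rewrite exp_0. pose proof (exp_ineq1_le (1 / D)). unfold q; simpl. nra.
  - replace (INR 1 ^ 2 / D) with (1 / D) by (simpl; unfold D; field; lra).
    unfold q; simpl. nra.
  - specialize (IH u ltac:(lia)).
    set (a := (INR u + 1) / (INR n + 1)).
    replace (Z.of_nat (S (S u))) with (Z.of_nat u + 2)%Z by lia.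
    replace (INR (S (S u)) ^ 2 / D) with (INR u ^ 2 / D + a)
      by (unfold a, D; rewrite !S_INR; field; lra).
    rewrite exp_plus.
    pose proof (p_step_exp n u) as Hs. replace (- (INR u + 1) / (INR n + 1)) with (- a) in Hs
      by (unfold a; field; lra).
    assert (Hinv : exp (- a) * exp a = 1) by (rewrite <- exp_plus, Rplus_opp_l; apply exp_0).
    pose proof (exp_pos (INR u ^ 2 / D)). pose proof (exp_pos a).
    pose proof (p_nonneg n (Z.of_nat u + 2)).
    apply Rle_trans with (p n (Z.of_nat u) * exp (- a) * (exp (INR u ^ 2 / D) * exp a)).
    + apply Rmult_le_compat_r; [nra | exact Hs].
    + replace (p n (Z.of_nat u) * exp (- a) * (exp (INR u ^ 2 / D) * exp a))
        with (p n (Z.of_nat u) * exp (INR u ^ 2 / D) * (exp (- a) * exp a)) by ring.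
      rewrite Hinv. lra.
Qed.

Lemma p_gauss_scaled n (u : nat) : (1 <= n)%nat ->
  p n (Z.of_nat u) <= q n * exp 1 * exp (- ((INR u / sqrt (INR n)) ^ 2 / 8)).
Proof.
  intros Hn. assert (HnR : 1 <= INR n) by (apply (le_INR 1); lia).
  set (D := 4 * (INR n + 1)). set (d := INR u). pose proof (pos_INR u).
  assert (Ht : (d / sqrt (INR n)) ^ 2 = d ^ 2 / INR n).
  { assert (0 < sqrt (INR n)) by (apply sqrt_lt_R0; lra).
    rewrite <- (pow2_sqrt (INR n)) at 2 by lra. field. lra. }
  assert (E1 : exp (1 / D) <= exp 1).
  { apply exp_le. unfold D. apply (Rmult_le_reg_l (4 * (INR n + 1))); [lra|].
    field_simplify; lra. }
  assert (E2 : exp (- (d ^ 2 / D)) <= exp (- ((d / sqrt (INR n)) ^ 2 / 8))).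
  { apply exp_le, Ropp_le_contravar. rewrite Ht. unfold D.
    apply (Rmult_le_reg_l (8 * INR n * (4 * (INR n + 1)))); [nra|].
    field_simplify; [|lra|lra]. pose proof (pow2_ge_0 d). nra. }
  pose proof (p_gauss n u) as HG. fold D d in HG.
  assert (Hsplit : p n (Z.of_nat u) = p n (Z.of_nat u) * exp (d ^ 2 / D) * exp (- (d ^ 2 / D))).
  { rewrite Rmult_assoc, <- exp_plus, Rplus_opp_r, exp_0. ring. }
  rewrite Hsplit. pose proof (q_nonneg n). pose proof (exp_pos (- (d ^ 2 / D))).
  pose proof (exp_pos (1 / D)).
  apply Rle_trans with (q n * exp (1 / D) * exp (- (d ^ 2 / D))).
  - apply Rmult_le_compat_r; [lra | exact HG].
  - apply Rmult_le_compat; try nra.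
Qed.

Definition ndist (x y : nat) : nat := if Nat.leb x y then (y - x)%nat else (x - y)%nat.

Lemma ndist_INR x y : INR (ndist x y) = Rabs (INR x - INR y).
Proof.
  unfold ndist. destruct (Nat.leb_spec x y) as [H|H]; rewrite minus_INR by lia.
  - apply le_INR in H. rewrite Rabs_left1 by lra. lra.
  - apply lt_INR in H. rewrite Rabs_right by lra. lra.
Qed.

Lemma p_half_dist n x y :
  p_half n x y = p n (Z.of_nat (ndist x y))
               - p n (Z.of_nat (ndist x y) + 2 * Z.of_nat (Nat.min x y + 1))%Z.
Proof.
  unfold p_half, ndist. destruct (Nat.leb_spec x y).
  - rewrite <- (p_sym n (Z.of_nat x - Z.of_nat y)). f_equal; f_equal; lia.
  - f_equal; f_equal; lia.
Qed.

(* Consecutive differences: n (p_n(u) - p_n(u+2)) = (2u+2) p_n(u+2) <= (2u+2) p_n(u). *)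
Lemma p_diff_step n (u : Z) :
  (0 <= u)%Z -> INR n * (p n u - p n (u + 2)%Z) <= (2 * IZR u + 2) * p n u.
Proof.
  intros Hu. pose proof (p_ratio n u). pose proof (p_decr n u ltac:(lia)).
  pose proof (p_nonneg n u). apply IZR_le in Hu. nra.
Qed.

Lemma p_diff n (d k : nat) :
  INR n * (p n (Z.of_nat d) - p n (Z.of_nat d + 2 * Z.of_nat k)%Z)
    <= 2 * INR k * (INR d + 2 * INR k - 1) * p n (Z.of_nat d).
Proof.
  pose proof (pos_INR n). pose proof (pos_INR d). pose proof (p_nonneg n (Z.of_nat d)).
  induction k as [|k IH].
  - replace (Z.of_nat d + 2 * Z.of_nat 0)%Z with (Z.of_nat d) by lia. simpl. lra.
  - replace (Z.of_nat d + 2 * Z.of_nat (S k))%Z with (Z.of_nat d + 2 * Z.of_nat k + 2)%Z by lia.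
    pose proof (p_diff_step n (Z.of_nat d + 2 * Z.of_nat k)%Z ltac:(lia)) as Hs.
    rewrite plus_IZR, mult_IZR, <- !INR_IZR_INZ in Hs. simpl IZR in Hs.
    pose proof (p_decr_iter n (Z.of_nat d) k ltac:(lia)).
    pose proof (pos_INR k). rewrite S_INR.
    assert ((2 * (INR d + 2 * INR k) + 2) * p n (Z.of_nat d + 2 * Z.of_nat k)%Z
            <= (2 * (INR d + 2 * INR k) + 2) * p n (Z.of_nat d)) by (apply Rmult_le_compat_l; lra).
    nra.
Qed.

Lemma p_half_nonneg n x y : 0 <= p_half n x y.
Proof.
  rewrite p_half_dist. pose proof (p_decr_iter n (Z.of_nat (ndist x y)) (Nat.min x y + 1) ltac:(lia)). lra.
Qed.

Lemma p_half_le n x y : p_half n x y <= p n (Z.of_nat (ndist x y)).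
Proof.
  rewrite p_half_dist.
  pose proof (p_nonneg n (Z.of_nat (ndist x y) + 2 * Z.of_nat (Nat.min x y + 1))). lra.
Qed.

Lemma p_half_boundary n x y :
  INR n * p_half n x y <= 2 * (INR x + 1) * (INR x + INR y + 1) * p n (Z.of_nat (ndist x y)).
Proof.
  rewrite p_half_dist.
  pose proof (p_nonneg n (Z.of_nat (ndist x y))).
  pose proof (p_diff n (ndist x y) (Nat.min x y + 1)) as Hd.
  assert (E : INR (ndist x y) + 2 * INR (Nat.min x y + 1) - 1 = INR x + INR y + 1).
  { unfold ndist. destruct (Nat.leb_spec x y).
    - rewrite Nat.min_l, minus_INR, plus_INR by lia. simpl. lra.
    - rewrite Nat.min_r, minus_INR, plus_INR by lia. simpl. lra. }
  rewrite E in Hd.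
  assert (K : INR (Nat.min x y + 1) <= INR x + 1).
  { rewrite plus_INR. simpl. apply Rplus_le_compat_r, le_INR. lia. }
  pose proof (pos_INR x). pose proof (pos_INR y). pose proof (pos_INR (Nat.min x y + 1)).
  assert (0 <= (INR x + INR y + 1) * p n (Z.of_nat (ndist x y))) by nra.
  nra.
Qed.

Definition window N x := psum (fun i => p N (Z.of_nat i - Z.of_nat x)%Z) (2 * x + 2).

(* The reflection terms telescope: sum_y (p_N(x-y) - p_N(x+y+2)) over
   y <= x+N leaves the window -x..x+1 minus a range outside the support. *)
Lemma psi_window x N : psi x N = window N x.
Proof.
  unfold psi, window. rewrite sum_f_R0_psum.
  set (g := fun i => p N (Z.of_nat i - Z.of_nat x)%Z).
  rewrite (psum_ext _ (fun i => g i - g (i + (2 * x + 2))%nat)).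
  2:{ intros i _. unfold p_half, g. rewrite <- (p_sym N (Z.of_nat i - Z.of_nat x)).
      f_equal; f_equal; lia. }
  rewrite psum_telescope.
  rewrite (psum_ext (fun i => g (S (x + N) + i)%nat) (fun _ => 0 * 0 + 0 * 0)).
  2:{ intros i _. unfold g. rewrite p_supp by lia. ring. }
  rewrite psum_lincomb. lra.
Qed.

(* Upper bounds on the window mass: it is a probability, and each of its
   2x+2 terms is at most q_N. *)
Lemma window_nonneg N x : 0 <= window N x.
Proof. apply psum_nonneg. intros; apply p_nonneg. Qed.

Lemma window_le_1 N x : window N x <= 1.
Proof.
  unfold window. rewrite (psum_ext _ (fun i => p N (- Z.of_nat x + Z.of_nat i)%Z))
    by (intros; f_equal; lia).
  apply p_block_mass.
Qed.

Lemma window_le_q N x : window N x <= (2 * INR x + 2) * q N.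
Proof.
  unfold window. replace (2 * INR x + 2) with (INR (2 * x + 2)) by (rewrite plus_INR, mult_INR; simpl; lra).
  apply psum_le_const. intros. apply p_le_q.
Qed.

Lemma p_step_low n (u : nat) :
  (INR n - 2 * INR u) * p n (Z.of_nat u) <= (INR n + 2) * p n (Z.of_nat u + 2)%Z.
Proof.
  pose proof (p_ratio n (Z.of_nat u)) as H. rewrite <- INR_IZR_INZ in H.
  pose proof (p_nonneg n (Z.of_nat u)). pose proof (p_nonneg n (Z.of_nat u + 2)).
  pose proof (pos_INR n). pose proof (pos_INR u). nra.
Qed.

Definition pair_mass n u := p n (Z.of_nat u) + p n (Z.of_nat u + 1)%Z.

Lemma pair_mass_nonneg n u : 0 <= pair_mass n u.
Proof. unfold pair_mass. pose proof (p_nonneg n (Z.of_nat u)). pose proof (p_nonneg n (Z.of_nat u + 1)). lra. Qed.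

Lemma pair_mass_step n u :
  (INR n - 2 * INR u - 2) * pair_mass n u <= (INR n + 2) * pair_mass n (u + 2).
Proof.
  unfold pair_mass. pose proof (p_step_low n u) as H0. pose proof (p_step_low n (S u)) as H1.
  rewrite S_INR in H1. replace (Z.of_nat (S u)) with (Z.of_nat u + 1)%Z in H1 by lia.
  replace (Z.of_nat (u + 2)) with (Z.of_nat u + 2)%Z by lia.
  replace (Z.of_nat u + 2 + 1)%Z with (Z.of_nat u + 1 + 2)%Z by lia.
  pose proof (p_nonneg n (Z.of_nat u)). lra.
Qed.

Lemma pair_mass_lower n j :
  (INR n + 2 - 2 * INR j * (INR j + 1)) * q n <= (INR n + 2) * pair_mass n (2 * j).
Proof.
  pose proof (pos_INR n). pose proof (q_nonneg n).
  induction j as [|j IH].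
  - unfold pair_mass, q. simpl. lra.
  - replace (2 * S j)%nat with (2 * j + 2)%nat by lia. rewrite S_INR.
    pose proof (pair_mass_step n (2 * j)) as H1. rewrite mult_INR in H1. simpl (INR 2) in H1.
    pose proof (pair_mass_nonneg n (2 * j + 2)). pose proof (pair_mass_nonneg n (2 * j)).
    pose proof (pos_INR j).
    destruct (Rle_dec (INR n + 2 - 2 * (INR j + 1) * (INR j + 1 + 1)) 0); [nra|].
    assert (A : 0 < INR n - 2 * (2 * INR j) - 2) by nra.
    assert (B : (INR n - 2 * (2 * INR j) - 2) * ((INR n + 2 - 2 * INR j * (INR j + 1)) * q n) <=
                (INR n - 2 * (2 * INR j) - 2) * ((INR n + 2) * pair_mass n (2 * j)))
      by (apply Rmult_le_compat_l; lra).
    apply (Rmult_le_reg_l (INR n + 2)); [lra|].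
    assert (C1 : (INR n + 2) * ((INR n - 2 * (2 * INR j) - 2) * pair_mass n (2 * j))
                 <= (INR n + 2) * ((INR n + 2) * pair_mass n (2 * j + 2)))
      by (apply Rmult_le_compat_l; lra).
    assert (0 <= 2 * INR j * (INR j + 1) * (4 * INR j + 4) * q n).
    { apply Rmult_le_pos; [|lra]. apply Rmult_le_pos; [|lra]. nra. }
    nra.
Qed.

Lemma psum_pairs N J :
  psum (fun i => p N (Z.of_nat i)) (2 * J + 2) = psum (fun j => pair_mass N (2 * j)) (J + 1).
Proof.
  induction J as [|J IH].
  { cbn [psum Nat.mul Nat.add]. unfold pair_mass. change (Z.of_nat 0 + 1)%Z with (Z.of_nat 1). lra. }
  replace (2 * S J + 2)%nat with (S (S (2 * J + 2))) by lia.
  replace (S J + 1)%nat with (S (J + 1)) by lia.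
  cbn [psum]. rewrite IH. unfold pair_mass.
  replace (2 * (J + 1))%nat with (2 * J + 2)%nat by lia.
  replace (Z.of_nat (S (2 * J + 2))) with (Z.of_nat (2 * J + 2) + 1)%Z by lia. lra.
Qed.

(* The window contains the J+1 pairs at 0, 2, ..., 2J; if 4J(J+1) <= N+2
   each carries at least q_N / 2. *)
Lemma window_lower N x J : (2 * J <= x)%nat -> (4 * J * (J + 1) <= N + 2)%nat ->
  (INR J + 1) * q N / 2 <= window N x.
Proof.
  intros H1 H2. unfold window.
  replace (2 * x + 2)%nat with (x + (x + 2))%nat by lia. rewrite psum_split.
  assert (0 <= psum (fun i => p N (Z.of_nat i - Z.of_nat x)%Z) x)
    by (apply psum_nonneg; intros; apply p_nonneg).
  cbv beta.
  rewrite (psum_ext (fun i => p N (Z.of_nat (x + i) - Z.of_nat x)%Z) (fun i => p N (Z.of_nat i)))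
    by (intros; f_equal; lia).
  replace (x + 2)%nat with ((2 * J + 2) + (x - 2 * J))%nat by lia. rewrite psum_split.
  assert (0 <= psum (fun i => p N (Z.of_nat (2 * J + 2 + i))) (x - 2 * J))
    by (apply psum_nonneg; intros; apply p_nonneg).
  rewrite psum_pairs.
  assert (INR (J + 1) * (q N / 2) <= psum (fun j => pair_mass N (2 * j)) (J + 1)).
  { apply psum_ge_const. intros j Hj.
    pose proof (pair_mass_lower N j). pose proof (pos_INR N). pose proof (q_nonneg N).
    assert (4 * INR j * (INR j + 1) <= INR N + 2).
    { assert (Hj' : (4 * j * (j + 1) <= N + 2)%nat) by nia. apply le_INR in Hj'.
      rewrite !mult_INR, !plus_INR in Hj'. simpl in Hj'. lra. }
    apply (Rmult_le_reg_l (INR N + 2)); [lra|]. nra. }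
  rewrite plus_INR in H3. simpl (INR 1) in H3. lra.
Qed.

Lemma diffusive_scale N :
  exists J, (4 * J * (J + 1) <= N + 2)%nat /\ sqrt (INR N + 1) <= 3 * (INR J + 1).
Proof.
  set (s := Nat.sqrt (N + 2)).
  pose proof (Nat.sqrt_spec (N + 2) ltac:(lia)) as [S1 S2]. fold s in S1, S2.
  exists (s / 3)%nat.
  pose proof (Nat.div_mod s 3 ltac:(lia)). pose proof (Nat.mod_upper_bound s 3 ltac:(lia)).
  set (J := (s / 3)%nat) in *.
  split.
  - assert (3 * J * (3 * J) <= s * s)%nat by (apply Nat.mul_le_mono; lia).
    assert (4 * J <= 5 * (J * J))%nat by (destruct J; nia). nia.
  - assert (HJ : (s + 1 <= 3 * (J + 1))%nat) by lia.
    apply le_INR in HJ. rewrite mult_INR, !plus_INR in HJ. simpl in HJ.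
    apply lt_INR in S2. rewrite mult_INR, !S_INR, plus_INR in S2. simpl in S2.
    pose proof (pos_INR s). pose proof (pos_INR N).
    rewrite <- (sqrt_square (3 * (INR J + 1))) by (pose proof (pos_INR J); lra).
    apply sqrt_le_1_alt. nra.
Qed.

Lemma psi_lower x N : INR x + 1 <= 12 * (INR x + 1 + sqrt (INR N + 1)) * psi x N.
Proof.
  rewrite psi_window.
  pose proof (pos_INR N). pose proof (pos_INR x).
  set (v := sqrt (INR N + 1)).
  assert (Hv0 : 0 < v) by (apply sqrt_lt_R0; lra).
  pose proof (q_sqrt_lower N) as Hq. fold v in Hq. pose proof (q_nonneg N).
  pose proof (window_nonneg N x).
  destruct (diffusive_scale N) as [J [HJ Hv]]. fold v in Hv.
  pose proof (Nat.div_mod x 2 ltac:(lia)). pose proof (Nat.mod_upper_bound x 2 ltac:(lia)).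
  set (h := (x / 2)%nat) in *.
  destruct (le_lt_dec h J) as [Hh|Hh].
  - (* a window of size ~x already carries mass ~ (x+1) q_N *)
    pose proof (window_lower N x h ltac:(lia) ltac:(nia)).
    assert (Hh2 : (x + 1 <= 2 * (h + 1))%nat) by lia. apply le_INR in Hh2.
    rewrite mult_INR, !plus_INR in Hh2. simpl in Hh2.
    assert (INR h + 1 <= (INR h + 1) * (q N * (2 * v))) by (pose proof (pos_INR h); nra).
    assert (INR x + 1 <= 8 * v * window N x) by nra.
    nra.
  - (* the diffusive window carries mass of order 1 *)
    pose proof (window_lower N x J ltac:(lia) HJ).
    assert (INR J + 1 <= (INR J + 1) * (q N * (2 * v))) by (pose proof (pos_INR J); nra).
    assert (1 <= 12 * window N x) by nra.
    nra.
Qed.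

Definition tdist n x y := INR (ndist x y) / sqrt (INR n).

Lemma tdist_nonneg n x y : (1 <= n)%nat -> 0 <= tdist n x y.
Proof.
  intros Hn. assert (1 <= INR n) by (apply (le_INR 1); lia).
  unfold tdist. apply Rmult_le_pos; [apply pos_INR|].
  apply Rlt_le, Rinv_0_lt_compat, sqrt_lt_R0; lra.
Qed.

Lemma tdist_mul n x y : (1 <= n)%nat -> tdist n x y * sqrt (INR n) = INR (ndist x y).
Proof.
  intros Hn. assert (1 <= INR n) by (apply (le_INR 1); lia).
  assert (0 < sqrt (INR n)) by (apply sqrt_lt_R0; lra).
  unfold tdist. field. lra.
Qed.

(* The near-boundary gain, in the form p^(1/2)_n(x,y) <= (4+2t) (x+1) p_n(|x-y|) / sqrt n:
   either x+1 >= sqrt n, or p_half_boundary gains a factor (x+1) (x+y+1) / n. *)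
Lemma p_half_sqrt_bound n x y : (1 <= n)%nat ->
  p_half n x y * sqrt (INR n)
    <= (4 + 2 * tdist n x y) * p n (Z.of_nat (ndist x y)) * (INR x + 1).
Proof.
  intros Hn.
  set (s := sqrt (INR n)). set (t := tdist n x y). set (f := p_half n x y).
  set (P := p n (Z.of_nat (ndist x y))).
  assert (Hs2 : s * s = INR n) by (apply sqrt_sqrt, pos_INR).
  assert (Hs1 : 1 <= s)
    by (unfold s; rewrite <- sqrt_1; apply sqrt_le_1_alt, (le_INR 1); lia).
  pose proof (tdist_nonneg n x y Hn) as Ht. pose proof (tdist_mul n x y Hn) as Hts. fold t s in Ht, Hts.
  pose proof (p_half_nonneg n x y) as Hf0. pose proof (p_half_le n x y) as Hf1.
  pose proof (p_half_boundary n x y) as Hf2. fold f P in Hf0, Hf1, Hf2.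
  pose proof (pos_INR x). pose proof (pos_INR y).
  assert (Hsum : INR x + INR y + 1 <= 2 * (INR x + 1) + t * s).
  { rewrite Hts, ndist_INR. destruct (Rle_dec (INR x) (INR y)).
    - rewrite Rabs_left1 by lra. lra.
    - rewrite Rabs_right by lra. lra. }
  destruct (Rle_dec s (INR x + 1)).
  - assert (f * s <= f * (INR x + 1)) by (apply Rmult_le_compat_l; lra).
    assert (f * (INR x + 1) <= P * (INR x + 1)) by (apply Rmult_le_compat_r; lra). nra.
  - assert (Hsq : f * (s * s) <= 2 * (INR x + 1) * (2 * s + t * s) * P).
    { rewrite Hs2. assert (2 * (INR x + 1) * (INR x + INR y + 1) * P
                           <= 2 * (INR x + 1) * (2 * s + t * s) * P).
      { apply Rmult_le_compat_r; [lra|]. apply Rmult_le_compat_l; lra. }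
      lra. }
    apply (Rmult_le_reg_l s); [lra|]. nra.
Qed.

(* Combined with the survival factor psi(y; m) <= 3 (y+1) / sqrt(m+2): when y+1 > x+1,
   the extra factor (y+1) = (x+1) + t sqrt n is paid by p_half_sqrt_bound. *)
Lemma p_half_survival_bound n m x y : (1 <= n)%nat ->
  p_half n x y * psi y m * sqrt (INR m + 2)
    <= (3 + 12 * tdist n x y + 6 * tdist n x y ^ 2) * p n (Z.of_nat (ndist x y)) * (INR x + 1).
Proof.
  intros Hn.
  set (t := tdist n x y). set (f := p_half n x y). set (P := p n (Z.of_nat (ndist x y))).
  set (mu := sqrt (INR m + 2)).
  pose proof (tdist_nonneg n x y Hn) as Ht. pose proof (tdist_mul n x y Hn) as Hts. fold t in Ht, Hts.
  pose proof (p_half_nonneg n x y) as Hf0. pose proof (p_half_le n x y) as Hf1.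
  pose proof (p_half_sqrt_bound n x y Hn) as Hfs. fold f P t in Hf0, Hf1, Hfs.
  pose proof (pos_INR x). pose proof (pos_INR y). pose proof (pos_INR m).
  assert (Hpsi : psi y m * mu <= 3 * (INR y + 1)).
  { rewrite psi_window. pose proof (window_le_q m y). pose proof (q_sqrt_shift_upper m).
    pose proof (q_nonneg m). pose proof (window_nonneg m y).
    assert (0 <= mu) by apply sqrt_pos. fold mu in H3.
    assert (window m y * mu <= (2 * INR y + 2) * q m * mu) by (apply Rmult_le_compat_r; lra). nra. }
  assert (Hfy : f * psi y m * mu <= 3 * f * (INR y + 1)).
  { rewrite Rmult_assoc. replace (3 * f * (INR y + 1)) with (f * (3 * (INR y + 1))) by ring.
    apply Rmult_le_compat_l; lra. }
  assert (HP : 0 <= P) by lra.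
  assert (0 <= P * (INR x + 1) * (12 * t + 6 * t ^ 2)) by (apply Rmult_le_pos; nra).
  destruct (Rle_dec (INR y) (INR x)).
  - assert (f * (INR y + 1) <= P * (INR x + 1)) by (apply Rmult_le_compat; lra). lra.
  - assert (Hy : INR y + 1 = INR x + 1 + t * sqrt (INR n)).
    { rewrite Hts, ndist_INR, Rabs_left1 by lra. lra. }
    rewrite Hy in Hfy.
    assert (f * (INR x + 1) <= P * (INR x + 1)) by (apply Rmult_le_compat_r; lra).
    assert (t * (f * sqrt (INR n)) <= t * ((4 + 2 * t) * P * (INR x + 1)))
      by (apply Rmult_le_compat_l; lra).
    nra.
Qed.

(* Polynomial bound on the h-transformed kernel:
   frak_p <= 204 (1+t)^2 p_n(|x-y|).  Uses psi(x;N) >~ (x+1)/(x+1+sqrt N)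
   and sqrt (N+1) <= sqrt n + sqrt (N-n+2). *)
Lemma frak_p_poly_bound N n x y : (1 <= n)%nat -> (n <= N)%nat ->
  frak_p N n x y <= 204 * p n (Z.of_nat (ndist x y)) * (1 + tdist n x y) ^ 2.
Proof.
  intros Hn HnN.
  set (m := (N - n)%nat). set (t := tdist n x y). set (P := p n (Z.of_nat (ndist x y))).
  set (f := p_half n x y). set (py := psi y m). set (px := psi x N).
  set (s := sqrt (INR n)). set (mu := sqrt (INR m + 2)). set (nu := sqrt (INR N + 1)).
  assert (HnR : 1 <= INR n) by (apply (le_INR 1); lia).
  pose proof (pos_INR m). pose proof (pos_INR x).
  assert (HNm : INR N = INR n + INR m) by (unfold m; rewrite <- plus_INR; f_equal; lia).
  assert (Hs2 : s * s = INR n) by (apply sqrt_sqrt; lra).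
  assert (Hmu2 : mu * mu = INR m + 2) by (apply sqrt_sqrt; lra).
  assert (Hnu2 : nu * nu = INR N + 1) by (apply sqrt_sqrt; lra).
  assert (0 <= s) by apply sqrt_pos. assert (0 <= mu) by apply sqrt_pos.
  assert (0 <= nu) by apply sqrt_pos.
  assert (Hnus : nu <= s + mu) by nra.
  pose proof (tdist_nonneg n x y Hn) as Ht. fold t in Ht.
  pose proof (p_half_nonneg n x y) as Hf0. pose proof (p_half_le n x y) as Hf1.
  pose proof (p_half_sqrt_bound n x y Hn) as Hfs.
  pose proof (p_half_survival_bound n m x y Hn) as Hfpy.
  fold f P t s py mu in Hf0, Hf1, Hfs, Hfpy.
  assert (Hpy0 : 0 <= py) by (unfold py; rewrite psi_window; apply window_nonneg).
  assert (Hpy1 : py <= 1) by (unfold py; rewrite psi_window; apply window_le_1).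
  pose proof (psi_lower x N) as Hpx. fold px nu in Hpx.
  assert (Hpx0 : 0 < px) by nra.
  assert (Hfpy0 : 0 <= f * py) by nra.
  assert (Hnum : f * py * (INR x + 1 + nu) <= 17 * P * (1 + t) ^ 2 * (INR x + 1)).
  { assert (f * py * nu <= f * py * s + f * py * mu) by nra.
    assert (f * py * s <= f * s) by (assert (0 <= f * s) by nra; nra).
    assert (f * py * (INR x + 1) <= P * (INR x + 1)) by (apply Rmult_le_compat_r; nra).
    assert (0 <= P * (INR x + 1) * t) by (apply Rmult_le_pos; nra).
    assert (0 <= P * (INR x + 1) * t ^ 2) by (apply Rmult_le_pos; nra).
    nra. }
  unfold frak_p. fold m f py px.
  apply (Rmult_le_reg_r px); [lra|]. unfold Rdiv. rewrite Rmult_assoc, Rinv_l, Rmult_1_r by lra.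
  assert (f * py * (INR x + 1) <= f * py * (12 * (INR x + 1 + nu) * px))
    by (apply Rmult_le_compat_l; nra).
  assert (12 * px * (f * py * (INR x + 1 + nu)) <= 12 * px * (17 * P * (1 + t) ^ 2 * (INR x + 1)))
    by (apply Rmult_le_compat_l; lra).
  assert (Hx : (INR x + 1) * (f * py) <= (INR x + 1) * (204 * P * (1 + t) ^ 2 * px)) by lra.
  apply Rmult_le_reg_l in Hx; lra.
Qed.

Lemma gauss_absorbs_poly b t : 0 <= t ->
  (1 + t) ^ 2 * exp (- (t ^ 2 / 8)) <= exp (2 * (b + 2) ^ 2) * exp (- b * t).
Proof.
  intros Ht. pose proof (exp_ineq1_le t).
  assert (Hsq : (1 + t) ^ 2 <= exp (2 * t)).
  { replace (2 * t) with (t + t) by ring. rewrite exp_plus, <- Rsqr_pow2. unfold Rsqr.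
    apply Rmult_le_compat; lra. }
  apply Rle_trans with (exp (2 * t) * exp (- (t ^ 2 / 8))).
  - apply Rmult_le_compat_r; [apply Rlt_le, exp_pos | exact Hsq].
  - rewrite <- !exp_plus. apply exp_le. pose proof (pow2_ge_0 (t - 4 * (b + 2))). nra.
Qed.

Theorem lemma3p8 (b : R) (hb : 0 < b) :
  exists C : R, 0 < C /\
    forall (x y N n : nat), (1 <= n)%nat -> (n <= N)%nat ->
      frak_p N n x y <=
        C / sqrt (INR n + 1) * exp (- b * Rabs (INR x - INR y) / sqrt (INR n)).
Proof.
  set (A := 204 * exp 1 * exp (2 * (b + 2) ^ 2)).
  assert (HA : 0 < A) by (unfold A; pose proof (exp_pos 1); pose proof (exp_pos (2 * (b + 2) ^ 2)); nra).
  exists (sqrt 2 * A). split; [pose proof (sqrt_lt_R0 2 ltac:(lra)); nra|].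
  intros x y N n Hn HnN.
  set (t := tdist n x y). set (P := p n (Z.of_nat (ndist x y))).
  set (r := sqrt (INR n + 1)).
  assert (Hr : 0 < r) by (apply sqrt_lt_R0; pose proof (pos_INR n); lra).
  replace (- b * Rabs (INR x - INR y) / sqrt (INR n)) with (- b * t)
    by (unfold t, tdist; rewrite ndist_INR; unfold Rdiv; ring).
  pose proof (tdist_nonneg n x y Hn) as Ht. fold t in Ht.
  pose proof (frak_p_poly_bound N n x y Hn HnN) as Hpoly.
  pose proof (p_gauss_scaled n (ndist x y) Hn) as Hgauss.
  change (INR (ndist x y) / sqrt (INR n)) with t in Hgauss.
  pose proof (gauss_absorbs_poly b t Ht) as Habs.
  pose proof (q_sqrt_upper n) as Hq. fold P t r in Hpoly, Hgauss, Hq.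
  pose proof (q_nonneg n). pose proof (exp_pos 1). pose proof (exp_pos (- b * t)).
  pose proof (exp_pos (- (t ^ 2 / 8))). pose proof (pow2_ge_0 (1 + t)).
  assert (Hmain : frak_p N n x y <= q n * A * exp (- b * t)).
  { apply Rle_trans with (204 * (q n * exp 1 * exp (- (t ^ 2 / 8))) * (1 + t) ^ 2).
    - apply Rle_trans with (1 := Hpoly). apply Rmult_le_compat_r; lra.
    - unfold A. replace (204 * (q n * exp 1 * exp (- (t ^ 2 / 8))) * (1 + t) ^ 2)
        with (204 * q n * exp 1 * ((1 + t) ^ 2 * exp (- (t ^ 2 / 8)))) by ring.
      replace (q n * (204 * exp 1 * exp (2 * (b + 2) ^ 2)) * exp (- b * t))
        with (204 * q n * exp 1 * (exp (2 * (b + 2) ^ 2) * exp (- b * t))) by ring.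
      apply Rmult_le_compat_l; [nra | exact Habs]. }
  apply Rle_trans with (1 := Hmain).
  apply (Rmult_le_reg_l r); [lra|].
  replace (r * (sqrt 2 * A / r * exp (- b * t))) with (sqrt 2 * (A * exp (- b * t))) by (field; lra).
  replace (r * (q n * A * exp (- b * t))) with (q n * r * (A * exp (- b * t))) by ring.
  apply Rmult_le_compat_r; [nra | exact Hq].
Qed.
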